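(* Let $k\ge 1$ and $1\le k^*\le k$ be integers, and run the Reduce-By-Median-Counter algorithm (defined in the context) with parameters $k,k^*$ on a weighted stream $(i_1,\Delta_1),(i_2,\Delta_2),\dots$. For each $n\ge 0$ let $f_{i,n}=\sum_{t\le n: i_t=i}\Delta_t$, let $\hat f_{i,n}$ be the output of Estimate$(i)$ after the first $n$ updates are processed, let $E_n=\max_{i\in[m]}(f_{i,n}-\hat f_{i,n})$, let $N_n=\sum_{t=1}^n\Delta_t$, and let $C_n=\sum_{j\in T}c(j)$ be the sum of the counters after the first $n$ updates. Then for every $n\ge 0$, $$E_n\le \frac{N_n-C_n}{k^*}.$$
   Context: A weighted stream over the universe $[m]=\{1,\dots,m\}$ is a sequence of updates $(i_t,\Delta_t)$ with $i_t\in[m]$ and real weights $\Delta_t>0$. The Reduce-By-Median-Counter algorithm with integer parameters $k\ge 1$ and $1\le k^*\le k$ maintains a set $T\subseteq[m]$ of at most $k$ items, each $j\in T$ carrying a nonnegative real counter $c(j)$; initially $T=\emptyset$. Update$(i,\Delta)$: if $i\in T$, set $c(i)\gets c(i)+\Delta$; else if $|T|<k$, add $i$ to $T$ with $c(i)=\Delta$; else call DecrementCounters(), and afterwards, if $\Delta\ge c_{k^*}$, add $i$ to $T$ with $c(i)=\Delta-c_{k^*}$. DecrementCounters(): let $c_{k^*}$ be the $k^*$-th largest value, counting multiplicity, of the multiset $\{c(j): j\in T\}$; for every $j\in T$ set $c(j)\gets c(j)-c_{k^*}$, and remove $j$ from $T$ if now $c(j)\le 0$. Estimate$(i)$ returns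 $c(i)$ if $i\in T$ and $0$ otherwise. *)

From mathcomp Require Import all_boot all_order all_algebra.
Set Implicit Arguments. Unset Strict Implicit. Unset Printing Implicit Defensive.
Import Order.TTheory GRing.Theory Num.Theory.
Local Open Scope ring_scope.

Section RBMC.
Variables (R : realFieldType) (m k kstar : nat).

(* State: the set T of tracked items and counters c (c j meaningful for j \in T). *)
Definition rbmc_state := ({set 'I_m} * {ffun 'I_m -> R})%type.

Definition rbmc_init : rbmc_state := (set0, [ffun => 0]).

Definition kth_largest (S : rbmc_state) : R :=
  nth 0 (sort (fun x y : R => y <= x) [seq S.2 j | j <- enum S.1]) kstar.-1.

Definition decrement_counters (S : rbmc_state) : rbmc_state * R :=
  let ck := kth_largest S in
  let c' := [ffun j => S.2 j - ck] in
  (([set j in S.1 | 0 < c' j], c'), ck).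

Definition rbmc_update (S : rbmc_state) (i : 'I_m) (d : R) : rbmc_state :=
  let: (T, c) := S in
  if i \in T then (T, [ffun j => if j == i then c j + d else c j])
  else if (#|T| < k)%N then (i |: T, [ffun j => if j == i then d else c j])
  else
    let: ((T', c'), ck) := decrement_counters S in
    if ck <= d then (i |: T', [ffun j => if j == i then d - ck else c' j])
    else (T', c').

Definition rbmc_estimate (S : rbmc_state) (i : 'I_m) : R :=
  if i \in S.1 then S.2 i else 0.

Definition rbmc_run (ii : nat -> 'I_m) (dd : nat -> R) (n : nat) : rbmc_state :=
  foldl (fun S t => rbmc_update S (ii t) (dd t)) rbmc_init (iota 1 n).

Definition freq (ii : nat -> 'I_m) (dd : nat -> R) (n : nat) (i : 'I_m) : R :=
  \sum_(1 <= t < n.+1 | ii t == i) dd t.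

Definition total_weight (dd : nat -> R) (n : nat) : R :=
  \sum_(1 <= t < n.+1) dd t.

Definition counter_sum (S : rbmc_state) : R := \sum_(j in S.1) S.2 j.

End RBMC.

From mathcomp Require Import all_boot all_order all_algebra.
From mathcomp Require Import lra zify.
Set Implicit Arguments. Unset Strict Implicit. Unset Printing Implicit Defensive.
Import Order.TTheory GRing.Theory Num.Theory.
Local Open Scope ring_scope.

(* If i_t is tracked or there is room for it, f and fhat grow alike, and so
   do N and C. Otherwise every counter drops by c = c_{k*}: each f_i - fhat_i
   then grows by at most c, whereas N - C grows by at least k* c, because at
   least k* tracked counters are >= c and each of them loses c, while the new item
   enters with a counter of at most Delta. Hence k* (f_i - fhat_i) <= N - C is
   invariant along the stream. *)

Section SortDescending.
Variable R : realDomainType.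
Implicit Types s : seq R.

Local Notation geR := (fun x y : R => y <= x).

Lemma nth_sort_ge0 s i : all (>= 0) s -> 0 <= nth 0 (sort geR s) i.
Proof.
rewrite -(all_sort _ geR) => s0; have [lt_i|le_i] := ltnP i (size (sort geR s)).
  exact: (allP s0) (mem_nth 0 lt_i).
by rewrite nth_default.
Qed.

Lemma sum_min_nth_sort s i : all (>= 0) s -> (i < size s)%N ->
  i.+1%:R * nth 0 (sort geR s) i
    <= \sum_(y <- s) Num.min y (nth 0 (sort geR s) i).
Proof.
set x := nth 0 _ i => s0 lt_i.
have x_ge0 : 0 <= x := nth_sort_ge0 i s0.
have sorted_s : sorted geR (sort geR s) by apply: sort_sorted => a b; exact: le_total.
have trans_geR : transitive geR by move=> a b c /= ba cb; exact: le_trans cb ba.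
have size_take_i : size (take i.+1 (sort geR s)) = i.+1 by rewrite size_takel ?size_sort.
rewrite -(perm_big _ (permEl (perm_sort geR s))) -(cat_take_drop i.+1 (sort geR s)).
rewrite big_cat /= -[leLHS]addr0; apply: lerD.
  have -> : i.+1%:R * x = \sum_(y <- take i.+1 (sort geR s)) x.
    by rewrite big_const_seq count_predT size_take_i iter_addr_0 mulr_natl.
  rewrite big_seq [leRHS]big_seq; apply: ler_sum => y /(nthP 0)[j].
  rewrite size_take_i => lt_ji <-; rewrite nth_take // min_r //.
  by apply: (sorted_leq_nth trans_geR (@lexx _ R) 0 sorted_s);
    rewrite ?inE ?size_sort /=; lia.
rewrite big_seq; apply: sumr_ge0 => y /mem_drop y_s; rewrite le_min x_ge0 andbT.
by move: s0; rewrite -(all_sort _ geR) => /allP; apply.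
Qed.

End SortDescending.

Section ReduceByMedian.
Variables (R : realFieldType) (m k kstar : nat).
Implicit Types (S : rbmc_state R m) (T : {set 'I_m}) (c : {ffun 'I_m -> R}).

Definition counters_ge0 S := forall j, j \in S.1 -> 0 <= S.2 j.

Lemma estimate_incr T c i d j : i \in T ->
  rbmc_estimate (T, [ffun j => if j == i then c j + d else c j]) j
    = rbmc_estimate (T, c) j + (if i == j then d else 0).
Proof.
move=> iT; rewrite /rbmc_estimate /= ffunE.
by case: (eqVneq j i) => [->|_]; rewrite ?iT ?addr0.
Qed.

Lemma counter_sum_incr T c i d : i \in T ->
  counter_sum (T, [ffun j => if j == i then c j + d else c j]) = counter_sum (T, c) + d.
Proof.
move=> iT; rewrite /counter_sum /= !(bigD1 i iT) /= ffunE eqxx.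
rewrite (eq_bigr c) => [|j /andP[_ /negbTE ji]]; last by rewrite ffunE ji.
by rewrite addrAC.
Qed.

Lemma estimate_setU1 T c i v j :
  rbmc_estimate (i |: T, [ffun j => if j == i then v else c j]) j
    = if j == i then v else rbmc_estimate (T, c) j.
Proof. by rewrite /rbmc_estimate /= in_setU1 ffunE; case: eqP. Qed.

Lemma counter_sum_setU1 T c i v : i \notin T ->
  counter_sum (i |: T, [ffun j => if j == i then v else c j]) = v + counter_sum (T, c).
Proof.
move=> iT; rewrite /counter_sum /= big_setU1 //= ffunE eqxx; congr (_ + _).
by apply: eq_bigr => j jT; rewrite ffunE ifN //; apply: contraNneq iT => <-.
Qed.

Lemma counter_sum_decrement S : counters_ge0 S -> (0 < kstar <= #|S.1|)%N ->
  counter_sum (decrement_counters kstar S).1 + kstar%:R * kth_largest kstar S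
    <= counter_sum S.
Proof.
move=> c0 /andP[kstar_gt0 kstar_le]; set x := kth_largest kstar S.
have -> : counter_sum (decrement_counters kstar S).1
          = \sum_(j in S.1) (S.2 j - Num.min (S.2 j) x).
  rewrite /counter_sum /= big_mkcond [RHS]big_mkcond /=.
  apply: eq_bigr => j _; rewrite inE ffunE; case: (j \in S.1) => //=.
  case: ifPn; rewrite ?subr_gt0 -?leNgt ?subr_le0 => cx.
    by rewrite min_r ?(ltW cx).
  by rewrite min_l // subrr.
have s0 : all (>= 0) [seq S.2 j | j <- enum S.1].
  by apply/allP => y /mapP[j]; rewrite mem_enum => jT ->; exact: c0.
have lt_kstar : (kstar.-1 < size [seq S.2 j | j <- enum S.1])%N.
  by rewrite size_map -cardE prednK.
have := sum_min_nth_sort s0 lt_kstar; rewrite -/(kth_largest kstar S) -/x.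
rewrite prednK // big_map big_enum /= sumrB /counter_sum; lra.
Qed.

Lemma decrement_countersP S S' x : counters_ge0 S -> (0 < kstar <= #|S.1|)%N ->
  decrement_counters kstar S = (S', x) ->
  [/\ 0 <= x, S'.1 \subset S.1, counters_ge0 S',
      forall j, rbmc_estimate S j - x <= rbmc_estimate S' j
    & counter_sum S' + kstar%:R * x <= counter_sum S].
Proof.
move=> c0 kstar_le [<- <-]; have x0 : 0 <= kth_largest kstar S.
  apply: nth_sort_ge0; apply/allP => y /mapP[j]; rewrite mem_enum => jT ->.
  exact: c0.
split=> //; last exact: counter_sum_decrement.
- by apply/subsetP => j; rewrite inE => /andP[].
- by move=> j /=; rewrite inE ffunE => /andP[_ /ltW].
move=> j; rewrite /rbmc_estimate /= inE ffunE; case: (j \in S.1) => /=; last lra.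
by case: ifPn; rewrite -?leNgt; lra.
Qed.

Definition update_bounded S S' i d delta :=
  [/\ 0 <= delta,
      forall j, rbmc_estimate S j + (if i == j then d else 0) - delta
                  <= rbmc_estimate S' j
    & counter_sum S' + kstar%:R * delta <= counter_sum S + d].

Lemma rbmc_update_bounded S i d : (0 < kstar <= k)%N -> 0 < d -> counters_ge0 S ->
  counters_ge0 (rbmc_update k kstar S i d) /\
  exists delta, update_bounded S (rbmc_update k kstar S i d) i d delta.
Proof.
case: S => T c /andP[kstar_gt0 kstar_le_k] d_gt0 c0; rewrite /rbmc_update.
case E: decrement_counters => [[T' c'] x] /=.
have [iT|iT] := boolP (i \in T).
  split=> [j /= jT|].
    by rewrite ffunE; case: eqP => _; have := c0 j jT; lra.
  exists 0; split=> [//|j|].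
    by rewrite estimate_incr // subr0.
  by rewrite counter_sum_incr // mulr0 addr0.
case: ifPn => [small|full].
  split=> [j /=|].
    by rewrite in_setU1 ffunE; case: eqP => [_ _|_ /c0 //]; lra.
  exists 0; split=> [//|j|]; last by rewrite counter_sum_setU1 //; lra.
  rewrite estimate_setU1; case: (eqVneq j i) => [->|_]; last lra.
  by rewrite /rbmc_estimate (negbTE iT); lra.
have kstar_le : (0 < kstar <= #|T|)%N.
  by rewrite kstar_gt0 (leq_trans kstar_le_k) // leqNgt.
have [x0 /subsetP subT c'0 est cs] := decrement_countersP c0 kstar_le E.
have iT' : i \notin T' by apply: contra iT; exact: subT.
have est_i : rbmc_estimate (T, c) i = 0 by rewrite /rbmc_estimate (negbTE iT).
case: leP => [le_xd|lt_dx].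
  split=> [j /=|].
    by rewrite in_setU1 ffunE; case: eqP => [_ _|_ /c'0 //]; lra.
  exists x; split=> [//|j|]; last by rewrite counter_sum_setU1 //; lra.
  rewrite estimate_setU1; case: (eqVneq j i) => [->|_]; last by have := est j; lra.
  by rewrite est_i; lra.
split=> //; exists x; split=> [//|j|]; last lra.
case: (eqVneq i j) => [<-|_]; last by have := est j; lra.
by rewrite est_i /rbmc_estimate /= (negbTE iT'); lra.
Qed.

Variables (ii : nat -> 'I_m) (dd : nat -> R).
Hypothesis kstar_bounds : (0 < kstar <= k)%N.
Hypothesis dd_gt0 : forall t, (0 < t)%N -> 0 < dd t.

Local Notation run := (rbmc_run k kstar ii dd).

Lemma rbmc_runS n : run n.+1 = rbmc_update k kstar (run n) (ii n.+1) (dd n.+1).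
Proof. by rewrite /rbmc_run -[n.+1]addn1 iotaD foldl_cat add1n addn1. Qed.

Lemma freqS n j :
  freq ii dd n.+1 j = freq ii dd n j + (if ii n.+1 == j then dd n.+1 else 0).
Proof. by rewrite /freq big_mkcond big_nat_recr //= -big_mkcond. Qed.

Lemma total_weightS n : total_weight dd n.+1 = total_weight dd n + dd n.+1.
Proof. by rewrite /total_weight big_nat_recr. Qed.

Lemma rbmc_run_invariant n :
  counters_ge0 (run n) /\
  forall j, kstar%:R * (freq ii dd n j - rbmc_estimate (run n) j)
              <= total_weight dd n - counter_sum (run n).
Proof.
elim: n => [|n [c0 err]].
  split=> j; first by rewrite inE.
  rewrite /freq /total_weight /rbmc_estimate /counter_sum.
  by rewrite !big_geq // big_set0 inE; lra.
have [c0' [delta [delta0 est cs]]] :=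
  rbmc_update_bounded (ii n.+1) kstar_bounds (dd_gt0 (ltn0Sn n)) c0.
rewrite rbmc_runS; split=> // j; rewrite freqS total_weightS.
apply: (le_trans (y := kstar%:R * (freq ii dd n j - rbmc_estimate (run n) j + delta))).
  apply: ler_wpM2l => //; move: (est j).
  (* [lra] does not accept [if] subterms as atoms. *)
  by move: (if _ then _ else _) => e; lra.
by rewrite mulrDr; have := err j; lra.
Qed.

End ReduceByMedian.

Theorem lemma6 (R : realFieldType) (m k kstar : nat)
  (ii : nat -> 'I_m) (dd : nat -> R)
  (hk : (1 <= k)%N) (hks1 : (1 <= kstar)%N) (hks2 : (kstar <= k)%N)
  (hpos : forall t, (1 <= t)%N -> 0 < dd t) (n : nat) :
  forall i : 'I_m,
    freq ii dd n i - rbmc_estimate (rbmc_run k kstar ii dd n) i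
      <= (total_weight dd n - counter_sum (rbmc_run k kstar ii dd n)) / kstar%:R.
Proof.
(* [hk] follows from [hks1] and [hks2]. *)
move=> i; have kstar_bounds : (0 < kstar <= k)%N by rewrite hks1 hks2.
have [_ err] := rbmc_run_invariant ii kstar_bounds hpos n.
by rewrite ler_pdivlMr ?ltr0n // mulrC; exact: err.
Qed.
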